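(* Let $K_n$ be the complete directed graph on $[n]$ with edges $(i,j)$ for all $i<j$. A subgraph $H\subseteq K_n$ gives a face $Q_H$ of $\tilde Q_{K_n}$ if and only if there are integers $0=n_0<n_1<\dots<n_\ell<n_{\ell+1}=n$ ($\ell\ge0$) and, for each $k=0,\dots,\ell$, disjoint subsets $L_k,R_k\subseteq[n_k+1,n_{k+1}]$ such that $H=\bigsqcup_{k=0}^{\ell}(K_{[n_k+1,n_{k+1}]})_{L_k,R_k}$, i.e. $E(H)=\{(i,j):i<j,\ i\in L_k,\ j\in R_k\text{ for some }k\}$.
   Context: $[a,b]=\{a,\dots,b\}$; $K_P$ is the complete graph on $P$ with edges oriented from smaller to larger vertex. For a graph $G$ and disjoint vertex sets $L,R$, $G_{L,R}$ is the subgraph with edges $\{(i,j)\in E(G):i\in L,j\in R\}$. Subgraphs $H\subseteq K_n$ have vertex set $[n]$. $Q_H=\mathrm{conv}\{\mathbf e_i-\mathbf e_j:(i,j)\in E(H)\}$ and $\tilde Q_{K_n}=\mathrm{conv}(\{\mathbf 0\}\cup\{\mathbf e_i-\mathbf e_j:1\le i<j\le n\})$ in $\mathbb R^n$. *)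

(* Points of R^n are row vectors 'rV[R]_n over an arbitrary
   real field R (the paper uses R = the reals). Vertex v of [n] = {1..n}
   is represented by the ordinal v-1 : 'I_n. *)
From HB Require Import structures.
From mathcomp Require Import all_boot all_order all_algebra.
Set Implicit Arguments. Unset Strict Implicit. Unset Printing Implicit Defensive.
Import Order.TTheory GRing.Theory Num.Theory.
Local Open Scope ring_scope.

Definition evec (R : realFieldType) (n : nat) (i : 'I_n) : 'rV[R]_n :=
  \row_(k < n) (if k == i then 1 else 0).

Definition in_conv (R : realFieldType) (n : nat) (I : finType) (P : pred I)
  (f : I -> 'rV[R]_n) (x : 'rV[R]_n) : Prop :=
  exists w : I -> R,
    (forall i, 0 <= w i) /\ (forall i, ~~ P i -> w i = 0) /\
    \sum_i w i = 1 /\ x = \sum_i w i *: f i.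

Definition dotv (R : realFieldType) (n : nat) (c x : 'rV[R]_n) : R :=
  \sum_(k < n) c 0 k * x 0 k.

(* F is a face of P: F = P ∩ {c.x = b} for a valid inequality c.x <= b on P
   (this includes the empty face and P itself). *)
Definition is_face (R : realFieldType) (n : nat) (P F : 'rV[R]_n -> Prop) : Prop :=
  exists (c : 'rV[R]_n) (b : R),
    (forall x, P x -> dotv c x <= b) /\
    (forall x, F x <-> (P x /\ dotv c x = b)).

Definition Q_H (R : realFieldType) (n : nat) (E : {set 'I_n * 'I_n}) (x : 'rV[R]_n) : Prop :=
  in_conv (fun e : 'I_n * 'I_n => e \in E) (fun e => evec R e.1 - evec R e.2) x.

(* \tilde Q_{K_n} = conv({0} ∪ {e_i - e_j : i < j}) ; None stands for the point 0 *)
Definition Qtilde (R : realFieldType) (n : nat) (x : 'rV[R]_n) : Prop :=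
  in_conv (fun o : option ('I_n * 'I_n) =>
             if o is Some e then (e.1 < e.2)%N else true)
          (fun o => if o is Some e then evec R e.1 - evec R e.2 else 0) x.

Arguments Q_H : clear implicits.
Arguments Qtilde : clear implicits.

(* A face of Qtilde is cut out by a valid inequality c.x <= b.  Since 0 is a
   vertex of Qtilde but not a point of Q_H, b > 0, and the edges of H are
   exactly the pairs i < j with c_i - c_j = b.  No vertex is then both a tail
   and a head, and two such tight edges whose intervals overlap have tails of
   equal weight.  Call a position m crossed when some edge (i, j) has
   i < m <= j; the uncrossed positions cut [n] into blocks, inside which
   overlapping edges can be chained from any tail i to any later head j, so
   that (i, j) is itself an edge.  Conversely, for a block decomposition the
   weight c_i = 3 (block of i) + [i in L] - [i in R] is valid with b = 2 and
   tight exactly on the prescribed edges. *)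

From HB Require Import structures.
From mathcomp Require Import all_boot all_order all_algebra ring lra zify.
Set Implicit Arguments.
Unset Strict Implicit.
Unset Printing Implicit Defensive.
Import Order.TTheory GRing.Theory Num.Theory.
Local Open Scope ring_scope.

Lemma sum_option (V : nmodType) (T : finType) (F : option T -> V) :
  \sum_o F o = F None + \sum_t F (Some t).
Proof.
rewrite (bigD1 None) //=; congr (_ + _).
rewrite (reindex_omap Some id) /=; last by case.
by apply: eq_bigl => t; rewrite eqxx.
Qed.

Lemma diff_indicators_le2 (R : realDomainType) (x1 x2 x3 x4 : bool) :
  (x1%:R - x2%:R) - (x3%:R - x4%:R) <= 2 :> R.
Proof. by case: x1; case: x2; case: x3; case: x4 => /=; lra. Qed.

Lemma diff_indicators_eq2 (R : realDomainType) (x1 x2 x3 x4 : bool) :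
  (x1%:R - x2%:R) - (x3%:R - x4%:R) = 2 :> R -> x1 && x4.
Proof. by case: x1; case: x2; case: x3; case: x4 => //=; lra. Qed.

Section ConvexHulls.
Variables (R : realFieldType) (n : nat).
Implicit Types (c x y : 'rV[R]_n) (b : R).

Lemma dotv_sum (I : finType) (w : I -> R) (f : I -> 'rV[R]_n) c :
  dotv c (\sum_i w i *: f i) = \sum_i w i * dotv c (f i).
Proof.
rewrite /dotv; under eq_bigr => k _ do rewrite summxE mulr_sumr.
rewrite exchange_big /=; apply: eq_bigr => i _.
by rewrite mulr_sumr; apply: eq_bigr => k _; rewrite mxE mulrCA.
Qed.

Lemma dotvB c x y : dotv c (x - y) = dotv c x - dotv c y.
Proof. by rewrite /dotv -sumrB; apply: eq_bigr => k _; rewrite !mxE mulrBr. Qed.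

Lemma dotv0 c : dotv c 0 = 0.
Proof. by rewrite /dotv big1 // => k _; rewrite mxE mulr0. Qed.

Lemma dotv_evec c (i : 'I_n) : dotv c (evec R i) = c 0 i.
Proof.
rewrite /dotv (bigD1 i) //= big1 ?addr0; first by rewrite mxE eqxx mulr1.
by move=> k /negbTE ki; rewrite mxE ki mulr0.
Qed.

Lemma dotv_evecB c (i j : 'I_n) : dotv c (evec R i - evec R j) = c 0 i - c 0 j.
Proof. by rewrite dotvB !dotv_evec. Qed.

Lemma evecBE (i j k : 'I_n) :
  (evec R i - evec R j) 0 k = (k == i)%:R - (k == j)%:R.
Proof. by rewrite !mxE; case: (k == i); case: (k == j). Qed.

Section Hull.
Variables (I : finType) (P : pred I) (f : I -> 'rV[R]_n).

Lemma in_conv_vertex i : P i -> in_conv P f (f i).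
Proof.
move=> Pi; exists (fun k => if k == i then 1 else 0); do !split.
- by move=> k; case: (k == i).
- by move=> k; case: eqP => // ->; rewrite Pi.
- by rewrite (bigD1 i) //= eqxx big1 ?addr0 // => k /negbTE ->.
- rewrite (bigD1 i) //= eqxx scale1r big1 ?addr0 // => k /negbTE ->.
  by rewrite scale0r.
Qed.

Lemma in_conv_nonempty x : in_conv P f x -> exists i, P i.
Proof.
move=> [w [_ [wP [w1 _]]]]; apply/existsP; apply: contraT => /existsPn noP.
by move: w1; rewrite big1 => [/eqP|i _]; [rewrite eq_sym oner_eq0 | apply/wP/noP].
Qed.

Lemma in_conv_dotv_le c b x :
  (forall i, P i -> dotv c (f i) <= b) -> in_conv P f x -> dotv c x <= b.
Proof.
move=> fle [w [w_ge0 [wP [w1 ->]]]]; rewrite dotv_sum -[b]mul1r -w1 mulr_suml.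
apply: ler_sum => i _; case: (boolP (P i)) => Pi; first by rewrite ler_wpM2l ?fle.
by rewrite wP // !mul0r.
Qed.

Lemma in_conv_dotv_eq c b x :
  (forall i, P i -> dotv c (f i) <= b) ->
  in_conv P f x /\ dotv c x = b <->
  in_conv (fun i => P i && (dotv c (f i) == b)) f x.
Proof.
move=> fle; split.
  move=> [[w [w_ge0 [wP [w1 xE]]]] xb]; exists w; do !split => //.
  have slack_ge0 i : true -> 0 <= w i * (b - dotv c (f i)).
    case: (boolP (P i)) => [Pi _|/wP -> _]; last by rewrite mul0r.
    by rewrite mulr_ge0 // subr_ge0 fle.
  have slack0 : \sum_i w i * (b - dotv c (f i)) = 0.
    under eq_bigr do rewrite mulrBr.
    by rewrite sumrB -mulr_suml w1 mul1r -dotv_sum -xE xb subrr.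
  move=> i; rewrite negb_and => /orP [/wP //|fi_ne].
  have /eqP := psumr_eq0P slack_ge0 slack0 (i := i) isT.
  by rewrite mulf_eq0 subr_eq0 [b == _]eq_sym (negbTE fi_ne) orbF => /eqP.
move=> [w [w_ge0 [wP [w1 xE]]]]; split.
  exists w; do !split => //.
  by move=> i Pi; apply: wP; rewrite negb_and Pi.
rewrite xE dotv_sum -[b]mul1r -w1 mulr_suml; apply: eq_bigr => i _.
case: (boolP (P i && (dotv c (f i) == b))) => [/andP [_ /eqP ->]|/wP ->].
  by rewrite mulrC.
by rewrite !mul0r.
Qed.

End Hull.

Lemma in_conv_option (T : finType) (P : pred (option T)) (Q : pred T)
    (f : T -> 'rV[R]_n) x :
  P None = false -> (forall t, P (Some t) = Q t) ->
  in_conv P (fun o => if o is Some t then f t else 0) x <-> in_conv Q f x.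
Proof.
move=> PN PS; split.
  move=> [w [w_ge0 [wP [w1 xE]]]]; exists (fun t => w (Some t)).
  have wN : w None = 0 by apply: wP; rewrite PN.
  do !split => //.
  - by move=> t Qt; apply: wP; rewrite PS.
  - by rewrite -w1 sum_option wN add0r.
  - by rewrite xE sum_option wN scale0r add0r.
move=> [w [w_ge0 [wP [w1 xE]]]].
exists (fun o => if o is Some t then w t else 0); do !split => //.
- by case.
- by case => [t|//]; rewrite PS; apply: wP.
- by rewrite sum_option add0r.
- by rewrite xE sum_option scale0r add0r.
Qed.
End ConvexHulls.

Section EdgePolytopes.
Variables (R : realFieldType) (n : nat).
Implicit Types (E : {set 'I_n * 'I_n}) (i j : 'I_n).

Lemma Qtilde0 : Qtilde R n 0.
Proof. exact: (in_conv_vertex _ (i := None)). Qed.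

Lemma Qtilde_edge i j : (i < j)%N -> Qtilde R n (evec R i - evec R j).
Proof. exact: (in_conv_vertex _ (i := (Some (i, j)))). Qed.

Lemma Q_H_edge E i j : (i, j) \in E -> Q_H R n E (evec R i - evec R j).
Proof. exact: (in_conv_vertex _ (i := (i, j))). Qed.

Lemma Q_H_edge_inv E i j : i != j -> Q_H R n E (evec R i - evec R j) -> (i, j) \in E.
Proof.
move=> ij QHij; set c := evec R i - evec R j.
have dotc (e : 'I_n * 'I_n) : dotv c (evec R e.1 - evec R e.2) =
    ((e.1 == i)%:R - (e.1 == j)%:R) - ((e.2 == i)%:R - (e.2 == j)%:R).
  by rewrite dotv_evecB !evecBE.
have c_le e : e \in E -> dotv c (evec R e.1 - evec R e.2) <= 2.
  by rewrite dotc => _; apply: diff_indicators_le2.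
have /(in_conv_dotv_eq _ c_le) : Q_H R n E c /\ dotv c c = 2.
  by split=> //; rewrite (dotc (i, j)) /= !eqxx (negbTE ij) eq_sym (negbTE ij) /=; lra.
case/in_conv_nonempty => -[a b] /andP [abE /eqP]; rewrite dotc.
by case/diff_indicators_eq2/andP => /eqP /= <- /eqP /= <-.
Qed.

Lemma Q_H_not0 E : (forall i j, (i, j) \in E -> (i < j)%N) -> ~ Q_H R n E 0.
Proof.
move=> E_lt QH0; set d : 'rV[R]_n := \row_k (k : nat)%:R.
have d_le e : e \in E -> dotv d (evec R e.1 - evec R e.2) <= -1.
  case: e => a b /E_lt; rewrite dotv_evecB !mxE /= -(ler_nat R) -natr1; lra.
by have := in_conv_dotv_le d_le QH0; rewrite dotv0; lra.
Qed.

Lemma face_Qtilde_tight E : (forall i j, (i, j) \in E -> (i < j)%N) ->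
  is_face (Qtilde R n) (Q_H R n E) ->
  exists (c : 'I_n -> R) (b : R), [/\ 0 < b,
    forall i j, (i < j)%N -> c i - c j <= b &
    forall i j, (i, j) \in E <-> (i < j)%N /\ c i - c j = b].
Proof.
move=> E_lt [c [b [c_le face]]]; exists (fun i => c 0 i), b.
have c_le_edge i j : (i < j)%N -> c 0 i - c 0 j <= b.
  by move=> ij; rewrite -dotv_evecB; apply/c_le/Qtilde_edge.
split=> //.
  rewrite lt_def; have := c_le _ Qtilde0; rewrite dotv0 => -> /[!andbT].
  apply/eqP => b0; apply: (Q_H_not0 E_lt); apply/face.
  by rewrite dotv0 b0; split=> //; apply: Qtilde0.
move=> i j; rewrite -dotv_evecB; split.
  by move=> ijE; split; [apply: E_lt | case/face: (Q_H_edge ijE)].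
case=> ij cij; apply: Q_H_edge_inv; first by rewrite neq_ltn ij.
by apply/face; split; [apply: Qtilde_edge|].
Qed.

End EdgePolytopes.

Lemma cut_enumeration (cut : pred nat) (n : nat) :
  (0 < n)%N -> cut 0%N -> cut n ->
  exists (l : nat) (s : nat -> nat), [/\ s 0%N = 0%N /\ s l.+1 = n,
    forall k, (k <= l)%N -> (s k < s k.+1)%N,
    forall k, (k <= l)%N -> cut (s k.+1) &
    forall k m, (k <= l)%N -> (s k < m < s k.+1)%N -> ~~ cut m].
Proof.
move=> n_gt0 cut0 cutn; pose S := [seq m <- iota 0 n.+1 | cut m].
have memS m : (m \in S) = (m <= n)%N && cut m.
  by rewrite mem_filter mem_iota add0n ltnS andbC.
have S0 : S = 0%N :: [seq m <- iota 1 n | cut m] by rewrite /S /= cut0.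
have S_last : last 0%N S = n.
  by rewrite /S -addn1 iotaD cats1 filter_rcons add0n cutn last_rcons.
have S_size : (2 <= size S)%N.
  have : n \in S by rewrite memS leqnn.
  by rewrite S0 inE (gtn_eqF n_gt0); case: [seq m <- iota 1 n | cut m].
have S_lt : sorted ltn S by apply/sorted_filter/iota_ltn_sorted/ltn_trans.
have S_le : sorted leq S by apply/sorted_filter/iota_sorted/leq_trans.
exists (size S).-2, (nth 0%N S).
have s_leq := sorted_leq_nth leq_trans leqnn 0%N S_le.
have inS k : (k < size S)%N -> k \in [pred k | k < size S]%N by [].
have s_mem k : (k < size S)%N -> (nth 0%N S k <= n)%N && cut (nth 0%N S k).
  by move=> kS; rewrite -memS; apply: mem_nth.
split.
- split; first by rewrite S0.
  have -> : (size S).-2.+1 = (size S).-1 by lia.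
  by rewrite nth_last.
- move=> k kl; apply: (sorted_ltn_nth ltn_trans 0%N S_lt); rewrite ?inS //; lia.
- by move=> k kl; case/andP: (s_mem k.+1 ltac:(lia)).
move=> k m kl /andP [skm msk]; apply/negP => cutm.
have sk1 : (nth 0%N S k.+1 <= n)%N by case/andP: (s_mem k.+1 ltac:(lia)).
have mS : m \in S by rewrite memS cutm andbT; lia.
have mS_idx : (index m S < size S)%N by rewrite index_mem.
have sm : nth 0%N S (index m S) = m by rewrite nth_index.
case: (ltnP k (index m S)) => [km|mk].
  by have := s_leq k.+1 (index m S); rewrite sm !inS //; lia.
by have := s_leq (index m S) k; rewrite sm !inS //; lia.
Qed.

Lemma block_cover (l : nat) (s : nat -> nat) (i : nat) :
  s 0%N = 0%N -> (i < s l.+1)%N -> exists2 k, (k <= l)%N & (s k <= i < s k.+1)%N.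
Proof.
move=> s0; elim: l => [|l IH] isl.
  by exists 0%N; rewrite ?s0.
case: (ltnP i (s l.+1)) => [/IH [k kl ik]|sli]; first by exists k => //; lia.
by exists l.+1; rewrite ?sli.
Qed.

(* The paper's [n_k] is [s k]; on 0-based vertices its block
   [[n_k + 1, n_{k+1}]] becomes [s k <= i < s k.+1]. *)
Definition block_decomposition (n : nat) (E : {set 'I_n * 'I_n}) : Prop :=
  exists (l : nat) (s : nat -> nat) (L Rs : nat -> {set 'I_n}),
    [/\ s 0%N = 0%N /\ s l.+1 = n,
        (forall k, (k <= l)%N -> (s k < s k.+1)%N),
        (forall k, (k <= l)%N -> forall i : 'I_n,
            (i \in L k) || (i \in Rs k) -> (s k <= i < s k.+1)%N),
        (forall k, (k <= l)%N -> [disjoint L k & Rs k]) &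
        (forall i j : 'I_n, (i, j) \in E <->
            ((i < j)%N /\ exists k, (k <= l)%N /\ i \in L k /\ j \in Rs k))].

Section TightPairs.
Variables (R : realFieldType) (n : nat) (c : 'I_n -> R) (b : R).
Variable E : {set 'I_n * 'I_n}.
Hypothesis b_gt0 : 0 < b.
Hypothesis c_le : forall i j : 'I_n, (i < j)%N -> c i - c j <= b.
Hypothesis E_tight : forall i j, (i, j) \in E <-> (i < j)%N /\ c i - c j = b.

Definition is_tail (i : 'I_n) := [exists j, (i, j) \in E].
Definition is_head (j : 'I_n) := [exists i, (i, j) \in E].
Definition crossed (m : nat) :=
  [exists e : 'I_n * 'I_n, (e \in E) && (e.1 < m <= e.2)%N].

Lemma tail_not_head m : is_tail m -> is_head m -> False.
Proof.
case/existsP => j /E_tight [mj cmj]; case/existsP => i /E_tight [im cim].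
by move: b_gt0 (c_le (ltn_trans im mj)); lra.
Qed.

Lemma tight_overlap a a' p p' : (a, a') \in E -> (p, p') \in E ->
  (p < a')%N -> (a < p')%N -> c a = c p.
Proof.
move=> /E_tight [_ caa] /E_tight [_ cpp] /c_le cpa /c_le cap; lra.
Qed.

Lemma tight_chain i j : is_tail i -> is_head j -> (i < j)%N ->
  (forall m, (i < m <= j)%N -> crossed m) -> (i, j) \in E.
Proof.
move=> /existsP [j1 ij1E] /existsP [p pjE] ij crossed_ij.
have reach_j (a a' : 'I_n) : (a, a') \in E -> c a = c i -> (a < j)%N ->
    (j <= a')%N -> (i, j) \in E.
  move=> aa'E cai aj ja'; have [pj cpj] := (E_tight p j).1 pjE.
  have cap := tight_overlap aa'E pjE (leq_trans pj ja') aj.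
  by apply/E_tight; rewrite -cai cap.
suff walk d (a a' : 'I_n) : (j - a' <= d)%N -> (a, a') \in E ->
    c a = c i -> (a < j)%N -> (i < a')%N -> (i, j) \in E.
  by apply: (walk _ i j1 (leqnn _)) => //; case/E_tight: ij1E.
elim: d a a' => [|d IH] a a' jd aa'E cai aj ia'.
  by apply: (reach_j a a') => //; lia.
case: (leqP j a') => [ja'|a'j]; first exact: (reach_j a a').
have /existsP [[e1 e2] /andP [eE /= /andP [e1_le_a' a'_lt_e2]]] : crossed a'.+1.
  by apply: crossed_ij; lia.
have e1_lt_a' : (e1 < a')%N.
  rewrite ltn_neqAle -ltnS e1_le_a' andbT; apply/eqP => e1_eq.
  have e1a' : e1 = a' by apply: val_inj.
  by apply: (@tail_not_head a'); apply/existsP; [exists e2; rewrite -e1a' | exists a].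
have [aa' _] := (E_tight a a').1 aa'E.
apply: (IH e1 e2) => //; try lia.
by rewrite (tight_overlap eE aa'E _ e1_lt_a') //; lia.
Qed.

Lemma tight_block_decomposition : (0 < n)%N -> block_decomposition E.
Proof.
move=> n_gt0.
have uncrossed0 : ~~ crossed 0 by apply/existsP => -[e /andP [_ /andP []]].
have uncrossedn : ~~ crossed n.
  by apply/existsP => -[e /andP [_ /andP [_]]]; rewrite leqNgt ltn_ord.
have [l [s [[s0 sl] s_lt cut_s gap]]] :=
  cut_enumeration (cut := fun m => ~~ crossed m) n_gt0 uncrossed0 uncrossedn.
pose L k := [set i : 'I_n | is_tail i && (s k <= i < s k.+1)%N].
pose Rs k := [set j : 'I_n | is_head j && (s k <= j < s k.+1)%N].
exists l, s, L, Rs; split=> // [k _ i|k _|i j].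
- by rewrite !inE => /orP [] /andP [].
- rewrite disjoint_subset; apply/subsetP => i; rewrite !inE.
  by case/andP => ti _; apply/negP => /andP [hi _]; apply: (tail_not_head ti hi).
split=> [ijE|[ij [k [kl []]]]].
  have [ij _] := (E_tight i j).1 ijE.
  have isl : (i < s l.+1)%N by rewrite sl.
  have [k kl /andP [ski isk]] := block_cover s0 isl.
  have jsk : (j < s k.+1)%N.
    rewrite ltnNge; apply: contraNN (cut_s k kl) => skj.
    by apply/existsP; exists (i, j); rewrite ijE isk.
  split=> //; exists k; split=> //; rewrite !inE ski isk jsk (leq_trans ski (ltnW ij)).
  by split; rewrite !andbT; apply/existsP; [exists j | exists i].
rewrite !inE => /andP [ti /andP [ski isk]] /andP [hj /andP [skj jsk]].
apply: tight_chain => // m /andP [im mj].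
by rewrite -[crossed m]negbK; apply: (gap k) => //; lia.
Qed.

End TightPairs.

Lemma sum_ord_ltn (m k : nat) : (\sum_(i < m) (i < k))%N = minn k m.
Proof.
elim: m => [|m IH]; first by rewrite big_ord0 minn0.
by rewrite big_ord_recr /= IH; case: (ltnP m k) => /=; lia.
Qed.

Section BlockWeights.
Local Open Scope nat_scope.
Variables (n l : nat) (s : nat -> nat) (L Rs : nat -> {set 'I_n}).
Hypothesis s_lt : forall k, k <= l -> s k < s k.+1.
Hypothesis in_block : forall k, k <= l -> forall i : 'I_n,
  (i \in L k) || (i \in Rs k) -> s k <= i < s k.+1.
Hypothesis LR_disjoint : forall k, k <= l -> [disjoint L k & Rs k].

Definition block_index (i : nat) : nat := \sum_(k < l.+1) (s k.+1 <= i).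

Lemma block_index_mono : {homo block_index : i j / i <= j}.
Proof.
move=> i j ij; apply: leq_sum => k _.
by case: (leqP (s k.+1) i) => // /leq_trans /(_ ij) ->.
Qed.

Lemma block_indexE k i : k <= l -> s k <= i < s k.+1 -> block_index i = k.
Proof.
move=> kl /andP [ski isk].
have s_le : {in [pred k | k <= l.+1] &, {homo s : k1 k2 / k1 <= k2}}.
  apply: homo_leq_in => [||x y z /[!inE] xl yl /andP [_ zy] |x /[!inE] _ xl].
  - exact: leqnn.
  - exact: leq_trans.
  - by rewrite inE; lia.
  - by apply/ltnW/s_lt.
rewrite /block_index (eq_bigr (fun k' : 'I_l.+1 => nat_of_bool (k' < k))).
  by rewrite sum_ord_ltn; lia.
move=> k' _; have k'l := ltn_ord k'; congr nat_of_bool.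
case: (ltnP k' k) => k'k; first by apply: leq_trans ski; apply: s_le; rewrite ?inE; lia.
apply/negbTE; rewrite -ltnNge; apply: leq_trans isk _.
by apply: s_le; rewrite ?inE; lia.
Qed.

Lemma block_indexL k (i : 'I_n) : k <= l -> i \in L k -> block_index i = k.
Proof. by move=> kl iL; apply/block_indexE/(in_block kl); rewrite ?iL. Qed.

Lemma block_indexR k (j : 'I_n) : k <= l -> j \in Rs k -> block_index j = k.
Proof. by move=> kl jR; apply/block_indexE/(in_block kl); rewrite ?jR ?orbT. Qed.

Definition in_tails (i : 'I_n) := [exists k : 'I_l.+1, i \in L k].
Definition in_heads (i : 'I_n) := [exists k : 'I_l.+1, i \in Rs k].

Lemma in_tails_block k i : k <= l -> i \in L k -> in_tails i && ~~ in_heads i.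
Proof.
move=> kl iL; apply/andP; split.
  by apply/existsP; exists (Ordinal (kl : k < l.+1)).
apply/existsP => -[k' iR]; have := block_indexR (ltn_ord k') iR.
rewrite (block_indexL kl iL) => kk'; move: (LR_disjoint kl); rewrite disjoint_subset.
by move=> /subsetP /(_ i iL); rewrite inE kk' iR.
Qed.

Lemma in_heads_block k j : k <= l -> j \in Rs k -> in_heads j && ~~ in_tails j.
Proof.
move=> kl jR; apply/andP; split.
  by apply/existsP; exists (Ordinal (kl : k < l.+1)).
apply/existsP => -[k' jL]; have := block_indexL (ltn_ord k') jL.
rewrite (block_indexR kl jR) => kk'; move: (LR_disjoint kl); rewrite disjoint_subset.
by move=> /subsetP /(_ j); rewrite kk' jL inE -kk' jR => /(_ isT).
Qed.

Variable R : realFieldType.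
Local Open Scope ring_scope.

(* The factor 3 exceeds the range [-2, 2] of the indicator part, so pairs in
   different blocks are never tight. *)
Definition block_weight (i : 'I_n) : R :=
  3 * (block_index i)%:R + ((in_tails i)%:R - (in_heads i)%:R).

Lemma block_weight_le (i j : 'I_n) :
  (i < j)%N -> block_weight i - block_weight j <= 2.
Proof.
move=> /ltnW /block_index_mono; rewrite -(ler_nat R) /block_weight.
have := diff_indicators_le2 R (in_tails i) (in_heads i) (in_tails j) (in_heads j).
lra.
Qed.

Lemma block_weight_eq2 (i j : 'I_n) : (i < j)%N ->
  block_weight i - block_weight j = 2 <->
  exists k, (k <= l)%N /\ i \in L k /\ j \in Rs k.
Proof.
move=> ij; have ind_le := diff_indicators_le2 R (in_tails i) (in_heads i)
  (in_tails j) (in_heads j).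
have := block_index_mono (ltnW ij); rewrite leq_eqVlt => /orP [/eqP Nij|Nij].
  rewrite /block_weight Nij; split=> [w2|[k [kl [iL jR]]]].
    have /andP [/existsP [k iL] /existsP [k' jR]] : in_tails i && in_heads j.
      by apply: (@diff_indicators_eq2 R _ (in_heads i) (in_tails j)); lra.
    have kk' : k = k' :> nat.
      by rewrite -(block_indexL (ltn_ord k) iL) Nij (block_indexR (ltn_ord k') jR).
    by exists k; split; [rewrite -ltnS | split; rewrite // kk'].
  case/andP: (in_tails_block kl iL) => -> /negbTE ->.
  case/andP: (in_heads_block kl jR) => -> /negbTE -> /=; lra.
split=> [|[k [kl [iL jR]]]]; last first.
  by move: Nij; rewrite (block_indexL kl iL) (block_indexR kl jR) ltnn.
move: Nij; rewrite /block_weight -(ltr_nat R) -natr1; lra.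
Qed.

End BlockWeights.

Lemma block_decomposition_face (R : realFieldType) (n : nat)
    (E : {set 'I_n * 'I_n}) :
  (forall i j : 'I_n, (i, j) \in E -> (i < j)%N) ->
  block_decomposition E -> is_face (Qtilde R n) (Q_H R n E).
Proof.
move=> E_lt [l [s [L [Rs [_ s_lt in_block LR_disjoint E_blocks]]]]].
pose w := block_weight l s L Rs R; exists (\row_i w i), 2.
have w_eq2 := block_weight_eq2 s_lt in_block LR_disjoint R.
have w_le (o : option ('I_n * 'I_n)) :
    (if o is Some e then (e.1 < e.2)%N else true) ->
    dotv (\row_i w i) (if o is Some e then evec R e.1 - evec R e.2 else 0) <= 2.
  by case: o => [[i j] /= ij|_]; rewrite ?dotv_evecB ?mxE ?block_weight_le ?dotv0.
split=> [x|x]; first exact: in_conv_dotv_le.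
rewrite (in_conv_dotv_eq _ w_le); symmetry; apply: in_conv_option.
  by rewrite dotv0 eq_sym pnatr_eq0.
move=> [i j] /=; rewrite dotv_evecB !mxE; case: (ltnP i j) => [ij|ji] /=.
  apply/eqP/idP => [/(w_eq2 _ _ ij) ?|/E_blocks [_ /(w_eq2 _ _ ij)]] //.
  by apply/E_blocks.
by apply/esym/negbTE/negP => /E_lt; rewrite ltnNge ji.
Qed.

Theorem mainTheorem18 (R : realFieldType) (n : nat) (hn : (0 < n)%N)
  (E : {set 'I_n * 'I_n})
  (hE : forall i j : 'I_n, (i, j) \in E -> (i < j)%N) :
  is_face (Qtilde R n) (Q_H R n E) <->
  exists (l : nat) (s : nat -> nat) (L Rs : nat -> {set 'I_n}),
    [/\ s 0%N = 0%N /\ s l.+1 = n,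
        (forall k, (k <= l)%N -> (s k < s k.+1)%N),
        (forall k, (k <= l)%N -> forall i : 'I_n,
            (i \in L k) || (i \in Rs k) -> (s k <= i < s k.+1)%N),
        (forall k, (k <= l)%N -> [disjoint L k & Rs k]) &
        (forall i j : 'I_n, (i, j) \in E <->
            ((i < j)%N /\ exists k, (k <= l)%N /\ i \in L k /\ j \in Rs k))].
Proof.
split; last exact: block_decomposition_face.
case/(face_Qtilde_tight hE) => c [b [b_gt0 c_le E_tight]].
exact: tight_block_decomposition b_gt0 c_le E_tight hn.
Qed.
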